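(* Let $R$ be an associative ring with identity and $a,b,c,d\in R$ such that both $a^{\|(b,c)}$ and $d^{\|(b,c)}$ exist. Then the following are equivalent: (i) $a^{\|(b,c)}a=d^{\|(b,c)}d$; (ii) $d^{\|(b,c)}da^{\|(b,c)}a=a^{\|(b,c)}ad^{\|(b,c)}d$; (iii) $a^{\|(b,c)}dd^{\|(b,c)}a=d^{\|(b,c)}aa^{\|(b,c)}d$; (iv) $a^{\|(b,c)}d$ is group invertible and $(a^{\|(b,c)}d)^{\#}=d^{\|(b,c)}a$; (v) $d^{\|(b,c)}a$ is group invertible and $(d^{\|(b,c)}a)^{\#}=a^{\|(b,c)}d$.
   Context: For $a,b,c\in R$, $a$ is $(b,c)$-invertible if there exists $y\in R$ with $y\in (bRy)\cap(yRc)$, $yab=b$ and $cay=c$; such $y$ is unique and denoted $a^{\|(b,c)}$. An element $x\in R$ is group invertible if there is $z\in R$ with $xzx=x$, $zxz=z$, $xz=zx$; such $z$ is unique and denoted $x^{\#}$. *)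

From HB Require Import structures.
From mathcomp Require Import all_boot all_order all_algebra.
Set Implicit Arguments. Unset Strict Implicit. Unset Printing Implicit Defensive.
Import GRing.Theory.
Local Open Scope ring_scope.

Definition bc_inverse (R : pzRingType) (a b c y : R) : Prop :=
  (exists r : R, y = b * r * y) /\ (exists s : R, y = y * s * c) /\
  y * a * b = b /\ c * a * y = c.

Definition group_inverse (R : pzRingType) (x z : R) : Prop :=
  x * z * x = x /\ z * x * z = z /\ x * z = z * x.

From HB Require Import structures.
From mathcomp Require Import all_boot all_order all_algebra.
Set Implicit Arguments. Unset Strict Implicit. Unset Printing Implicit Defensive.
Import GRing.Theory.
Local Open Scope ring_scope.

(* Any two (b,c)-inverses y of a and y' of d absorb each other: y a y' = y'
   (as y' lies in bR) and y d y' = y (as y lies in Rc).  Hence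
   (a^{||(b,c)} d)(d^{||(b,c)} a) = a^{||(b,c)} a and symmetrically, while
   a^{||(b,c)} d and d^{||(b,c)} a are mutual reflexive inner inverses; so
   d^{||(b,c)} a is the group inverse of a^{||(b,c)} d exactly when the two
   products commute, i.e. when a^{||(b,c)} a = d^{||(b,c)} d. *)

Section BcInverse.

Variables (R : pzRingType) (a b c y : R).
Hypothesis Hy : bc_inverse a b c y.

Lemma bc_inverse_mulKl (u : R) : y * a * (b * u) = b * u.
Proof. by case: Hy => _ [_ [yab _]]; rewrite mulrA yab. Qed.

Lemma bc_inverse_mulKr (u : R) : u * c * a * y = u * c.
Proof. by case: Hy => _ [_ [_ cay]]; rewrite -!mulrA (mulrA c) cay. Qed.

End BcInverse.

Section TwoBcInverses.

Variables (R : pzRingType) (a d b c y y' : R).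
Hypotheses (Hy : bc_inverse a b c y) (Hy' : bc_inverse d b c y').

Lemma bc_inverse_absorbl : y * a * y' = y'.
Proof.
case: Hy' => [[r ->] _].
by rewrite -[b * r * y']mulrA (bc_inverse_mulKl Hy).
Qed.

Lemma bc_inverse_absorbr : y * d * y' = y.
Proof.
case: Hy => _ [[s ->] _].
by rewrite (bc_inverse_mulKr Hy').
Qed.

Lemma bc_inverse_mul_swap : y * d * (y' * a) = y * a.
Proof. by rewrite mulrA bc_inverse_absorbr. Qed.

End TwoBcInverses.

Lemma bc_inverse_idem (R : pzRingType) (a b c y : R) :
  bc_inverse a b c y -> y * a * y = y.
Proof. by move=> Hy; exact: (bc_inverse_absorbl Hy Hy). Qed.

Lemma group_inverse_uniq (R : pzRingType) (x z z' : R) :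
  group_inverse x z -> group_inverse x z' -> z = z'.
Proof.
move=> [xzx [zxz xzC]] [xz'x [z'xz' xz'C]].
have xzE : x * z = x * z' * (x * z) by rewrite mulrA xz'x.
have xz'E : x * z' = x * z * (x * z') by rewrite mulrA xzx.
have xz_xz' : x * z = x * z'.
  by rewrite xz'E xzE xzC xz'C -!mulrA (mulrA x z') xz'x.
by rewrite -zxz -z'xz' -mulrA xz_xz' mulrA -xzC xz_xz' xz'C.
Qed.

Lemma group_inverse_unique_witness (R : pzRingType) (x w : R) :
  (exists z, group_inverse x z) /\ (forall z, group_inverse x z -> z = w)
  <-> group_inverse x w.
Proof.
split; first by case=> [[z Hz] uniq_z]; rewrite -(uniq_z z Hz).
by move=> Hw; split=> [|z Hz]; [exists w | exact: group_inverse_uniq Hz Hw].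
Qed.

Lemma bc_inverse_group_inverse_swap (R : pzRingType) (a d b c y y' : R) :
  bc_inverse a b c y -> bc_inverse d b c y' ->
  group_inverse (y * d) (y' * a) <-> y * a = y' * d.
Proof.
move=> Hy Hy'.
rewrite /group_inverse (bc_inverse_mul_swap Hy Hy') (bc_inverse_mul_swap Hy' Hy).
rewrite !mulrA (bc_inverse_idem Hy) (bc_inverse_idem Hy').
by split=> [[_ []] | yE].
Qed.

Theorem theorem4p3 (R : pzRingType) (a b c d ya yd : R)
  (Hya : bc_inverse a b c ya) (Hyd : bc_inverse d b c yd) :
  [/\ (ya * a = yd * d <-> yd * d * ya * a = ya * a * yd * d),
      (ya * a = yd * d <-> ya * d * yd * a = yd * a * ya * d),
      (ya * a = yd * d <->
         (exists z, group_inverse (ya * d) z) /\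
         (forall z, group_inverse (ya * d) z -> z = yd * a)) &
      (ya * a = yd * d <->
         (exists z, group_inverse (yd * a) z) /\
         (forall z, group_inverse (yd * a) z -> z = ya * d))].
Proof.
have swap_ad := bc_inverse_group_inverse_swap Hya Hyd.
have swap_da := bc_inverse_group_inverse_swap Hyd Hya.
have eq_symmetry : ya * a = yd * d <-> yd * d = ya * a by split=> ->.
split.
- by rewrite (bc_inverse_absorbl Hyd Hya) (bc_inverse_absorbl Hya Hyd).
- by rewrite (bc_inverse_absorbr Hya Hyd) (bc_inverse_absorbr Hyd Hya).
- exact: iff_trans (iff_sym swap_ad) (iff_sym (group_inverse_unique_witness _ _)).
- apply: iff_trans eq_symmetry _.
  exact: iff_trans (iff_sym swap_da) (iff_sym (group_inverse_unique_witness _ _)).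
Qed.
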